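(* Let $A=[a_{ij}]$ be an $n\times n$ real matrix and suppose that $Av=\lambda v$ for some real number $\lambda$ and some real vector $v=(v_1,\dots,v_n)^T$ with $v_i\neq 0$ for all $i$. Let $S=\mathrm{diag}(v)$ and $B=S^{-1}AS$. If $\lambda_2$ is an eigenvalue of $A$ different from $\lambda$, then $\lambda_2$ lies in the Gershgorin region of the second type of $B^T$.
   Context: For a real $n\times n$ matrix $M=[m_{ij}]$ and an index $j$, let $y_1\ge y_2\ge\dots\ge y_n$ be the non-increasing rearrangement of the $n$ numbers $m_{1j},\dots,m_{j-1,j},0,m_{j+1,j},\dots,m_{nj}$ (the $j$-th column of $M$ with its diagonal entry replaced by $0$). Define $\hat r_j=\sum_{t=1}^{(n-1)/2}y_t-\sum_{t=(n+3)/2}^{n}y_t$ if $n$ is odd, and $\hat r_j=\sum_{t=1}^{n/2}y_t-\sum_{t=n/2+1}^{n}y_t$ if $n$ is even. The Gershgorin disc of the second type of $M^T$ associated with index $j$ is the closed disc $\{z\in\mathbb{C}:|z-m_{jj}|\le \hat r_j\}$, and the Gershgorin region of the second type of $M^T$ is the union of these $n$ discs. *)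

From HB Require Import structures.
From mathcomp Require Import all_boot all_order all_algebra.
From mathcomp Require Import complex.
Set Implicit Arguments. Unset Strict Implicit. Unset Printing Implicit Defensive.
Import Order.TTheory GRing.Theory Num.Theory.
Local Open Scope ring_scope.

Definition gersh_seq (R : realDomainType) (n : nat) (M : 'M[R]_n) (j : 'I_n)
  : seq R :=
  sort (fun x y : R => y <= x) [seq (if i == j then 0 else M i j) | i <- enum 'I_n].

(* y_t with 1-based index t *)
Definition gersh_y (R : realDomainType) (n : nat) (M : 'M[R]_n) (j : 'I_n)
  (t : nat) : R := nth 0 (gersh_seq M j) t.-1.

Definition gersh_rhat (R : realDomainType) (n : nat) (M : 'M[R]_n) (j : 'I_n) : R :=
  if odd n then
    \sum_(1 <= t < (n - 1)%/2 + 1) gersh_y M j t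
    - \sum_((n + 3)%/2 <= t < n + 1) gersh_y M j t
  else
    \sum_(1 <= t < n%/2 + 1) gersh_y M j t
    - \sum_(n%/2 + 1 <= t < n + 1) gersh_y M j t.

Definition gersh2_disc (R : rcfType) (n : nat) (M : 'M[R]_n) (j : 'I_n) : pred R[i] :=
  fun z => `|z - (M j j)%:C%C| <= (gersh_rhat M j)%:C%C.

(* Gershgorin region of the second type of M^T *)
Definition gersh2_region (R : rcfType) (n : nat) (M : 'M[R]_n) : pred R[i] :=
  fun z => [exists j : 'I_n, gersh2_disc M j z].

From HB Require Import structures.
From mathcomp Require Import all_boot all_order all_algebra.
From mathcomp Require Import complex zify ring.
Set Implicit Arguments.
Unset Strict Implicit.
Unset Printing Implicit Defensive.
Import Order.TTheory GRing.Theory Num.Theory.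
Local Open Scope ring_scope.

(* Let u be a left eigenvector of A for lambda2. Then x := u S is a left
   eigenvector of B for lambda2, and sum_i x_i = u v = 0 because v is a right
   eigenvector of A for lambda <> lambda2. Take j with |x_j| maximal and let c
   be column j of B with its diagonal entry replaced by 0. For every g,
     (lambda2 - b_jj) x_j = sum_i x_i c_i = sum_i x_i (c_i - g),
   so |lambda2 - b_jj| <= sum_i |c_i - g|. For g a median of the c_i this sum
   is the sum of the n/2 largest c_i minus the sum of the n/2 smallest, i.e.
   the radius \hat r_j. *)

Lemma sum_dist_median (R : realDomainType) (s : seq R) :
  sorted (fun x y : R => y <= x) s ->
  let k := (size s)./2 in
  \sum_(t < size s) `|s`_t - s`_k| =
  \sum_(0 <= t < k) s`_t - \sum_(size s - k <= t < size s) s`_t.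
Proof.
move=> s_sorted k; set n := size s.
have s_mono a b : (a <= b < n)%N -> s`_b <= s`_a.
  move=> /andP[ab bn]; apply: (sorted_leq_nth (@ge_trans _ _) (@lexx _ _)) => //.
  by rewrite inE; apply: leq_ltn_trans bn.
have n_k : (n - k = k + odd n)%N by move: (odd_double_half n); rewrite /k; lia.
have mid : \sum_(k <= t < n - k) s`_t = s`_k *+ odd n.
  rewrite n_k; case: (odd n) => /=; first by rewrite addn1 big_nat1.
  by rewrite addn0 big_geq.
rewrite -(big_mkord xpredT (fun t => `|s`_t - s`_k|)) (big_cat_nat (leq0n k)) /=.
- rewrite (eq_big_nat _ _ (F2 := fun t => s`_t - s`_k)); last first.
    by move=> t /andP[_ tk]; rewrite ger0_norm // subr_ge0 s_mono //= ltnW /k; lia.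
  rewrite (eq_big_nat _ _ (m := k) (F2 := fun t => s`_k - s`_t)); last first.
    by move=> t /andP[kt tn]; rewrite distrC ger0_norm // subr_ge0 s_mono ?kt.
  rewrite !sumrB !sumr_const_nat (big_cat_nat (_ : k <= n - k)%N) /=; [|lia|lia].
  rewrite mid subn0 n_k mulrnDr; ring.
- by rewrite /k; lia.
Qed.

Section GershgorinRadius.

Variables (R : realDomainType) (n : nat) (M : 'M[R]_n) (j : 'I_n).

(* 0-based index: this is y_(n/2 + 1) in the 1-based notation of gersh_y. *)
Definition gersh_median : R := (gersh_seq M j)`_n./2.

Lemma size_gersh_seq : size (gersh_seq M j) = n.
Proof. by rewrite size_sort size_map size_enum_ord. Qed.

Lemma sorted_gersh_seq : sorted (fun x y : R => y <= x) (gersh_seq M j).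
Proof. exact: sort_sorted (fun x y => le_total y x) _. Qed.

Lemma gersh_rhat_top_bottom :
  gersh_rhat M j =
  \sum_(0 <= t < n./2) (gersh_seq M j)`_t
  - \sum_(n - n./2 <= t < n) (gersh_seq M j)`_t.
Proof.
have n_half := odd_double_half n.
have -> : gersh_rhat M j =
    \sum_(1 <= t < n./2.+1) gersh_y M j t
    - \sum_((n - n./2).+1 <= t < n.+1) gersh_y M j t.
  rewrite /gersh_rhat !addn1; move: n_half; case: ifP => n_odd n_half.
    have -> : ((n - 1) %/ 2 = n./2)%N by lia.
    by have -> : ((n + 3) %/ 2 = (n - n./2).+1)%N by lia.
  have -> : (n %/ 2 = n./2)%N by lia.
  by have -> : (n - n./2 = n./2)%N by lia.
by rewrite !big_add1.
Qed.

Lemma gersh_rhat_median :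
  gersh_rhat M j = \sum_i `|(if i == j then 0 else M i j) - gersh_median|.
Proof.
have := sum_dist_median sorted_gersh_seq.
rewrite /= size_gersh_seq -gersh_rhat_top_bottom -/gersh_median => <-.
transitivity (\sum_(y <- gersh_seq M j) `|y - gersh_median|).
  by rewrite (big_nth 0) size_gersh_seq big_mkord.
by rewrite (perm_big _ (permEl (perm_sort _ _))) big_map big_enum.
Qed.

End GershgorinRadius.

Lemma ler_norm_sum_mul_dev (C : numDomainType) (I : finType) (x c : I -> C) (m g : C) :
  \sum_i x i = 0 -> (forall i, `|x i| <= m) ->
  `|\sum_i x i * c i| <= m * \sum_i `|c i - g|.
Proof.
move=> x_sum0 x_le_m.
have -> : \sum_i x i * c i = \sum_i x i * (c i - g).
  by rewrite (eq_bigr _ (fun i _ => mulrBr _ _ _)) sumrB -mulr_suml x_sum0 mul0r subr0.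
rewrite mulr_sumr; apply: le_trans (ler_norm_sum _ _ _) _.
by apply: ler_sum => i _; rewrite normrM ler_wpM2r.
Qed.

Lemma exists_argmax_norm (C : numDomainType) (I : finType) (x : I -> C) (i0 : I) :
  exists j, forall i, `|x i| <= `|x j|.
Proof.
have norm_total : {in xpredT &, total (relpre (fun i => `|x i|) (>=%R : rel C))}.
  by move=> i k _ _; apply: real_leVge; exact: normr_real.
have [j _ j_max] := @extremum_inP _ _ >=%R i0 xpredT (fun i => `|x i|)
  (fun i _ => lexx `|x i|)
  (fun k i l _ _ _ ik kl => le_trans kl ik) norm_total isT.
by exists j => i; exact: j_max.
Qed.

Lemma normr_real_complex (R : rcfType) (r : R) : `|r%:C%C| = `|r|%:C%C.
Proof. by rewrite normc_def /= expr0n addr0 sqrtr_sqr. Qed.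

Lemma gersh2_region_left_eigen (R : rcfType) (n : nat) (B : 'M[R]_n) (z : R[i])
    (x : 'rV[R[i]]_n) :
  x != 0 -> x *m map_mx (fun r : R => r%:C%C) B = z *: x -> \sum_i x 0 i = 0 ->
  gersh2_region B z.
Proof.
move=> x_neq0 x_eigen x_sum0.
have [i0 xi0_neq0] : exists i0, x 0 i0 != 0.
  apply/existsP; apply: contraNT x_neq0 => /existsPn x_eq0.
  by apply/eqP/rowP => i; rewrite mxE; apply/eqP/negPn/x_eq0.
have [j x_le_xj] := exists_argmax_norm (fun i => x 0 i) i0.
have xj_gt0 : 0 < `|x 0 j| by apply: lt_le_trans (x_le_xj i0); rewrite normr_gt0.
apply/existsP; exists j; rewrite /gersh2_disc.
pose c i := if i == j then 0 else B i j.
have col_j : (z - (B j j)%:C%C) * x 0 j = \sum_i x 0 i * (c i)%:C%C.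
  have := congr1 (fun N : 'rV[R[i]]_n => N 0 j) x_eigen.
  rewrite !mxE mulrBl => <-.
  rewrite (bigD1 j) //= [RHS](bigD1 j) //= /c eqxx mulr0 add0r mxE mulrC addrAC subrr add0r.
  by apply: eq_bigr => i /negPf ->; rewrite mxE.
have := ler_norm_sum_mul_dev (fun i => (c i)%:C%C) (gersh_median B j)%:C%C x_sum0 x_le_xj.
rewrite -col_j normrM mulrC.
under eq_bigr do rewrite -rmorphB normr_real_complex.
by rewrite -rmorph_sum -gersh_rhat_median ler_pM2l.
Qed.

Lemma mulmx_left_right_eigen_eq0 (F : idomainType) (n : nat) (M : 'M[F]_n)
    (u : 'rV_n) (w : 'cV_n) (a b : F) :
  u *m M = a *: u -> M *m w = b *: w -> a != b -> u *m w = 0.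
Proof.
move=> u_eigen w_eigen /negPf a_neq_b; apply/eqP.
have : (a - b) *: (u *m w) = 0.
  by rewrite scalerBl scalemxAl -u_eigen scalemxAr -w_eigen mulmxA subrr.
by move/eqP; rewrite scalemx_eq0 subr_eq0 a_neq_b.
Qed.

Lemma left_eigen_similar (F : comUnitRingType) (n : nat) (A S : 'M[F]_n)
    (u : 'rV_n) (a : F) :
  S \in unitmx -> u *m A = a *: u -> (u *m S) *m (invmx S *m A *m S) = a *: (u *m S).
Proof. by move=> S_unit u_eigen; rewrite !mulmxA mulmxK // u_eigen scalemxAl. Qed.

Theorem theorem3 (R : rcfType) (n : nat) (A : 'M[R]_n) (lambda : R) (v : 'cV[R]_n)
  (hv : A *m v = lambda *: v) (hnz : forall i : 'I_n, v i 0 != 0)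
  (lambda2 : R[i])
  (heig : eigenvalue (map_mx (fun x : R => x%:C%C) A) lambda2)
  (hne : lambda2 != lambda%:C%C) :
  let S := diag_mx (v^T) in
  let B := invmx S *m A *m S in
  gersh2_region B lambda2.
Proof.
rewrite /=; set S := diag_mx _; set B := invmx S *m A *m S.
have S_unit : S \in unitmx.
  by rewrite unitmxE det_diag unitfE; apply/prodf_neq0 => i _; rewrite mxE.
case/eigenvalueP: heig => u u_eigen u_neq0.
pose Sc := map_mx (fun x : R => x%:C%C) S.
have Sc_unit : Sc \in unitmx by rewrite map_unitmx.
have vc_eigen : map_mx (fun x : R => x%:C%C) A *m map_mx (fun x : R => x%:C%C) v
    = lambda%:C%C *: map_mx (fun x : R => x%:C%C) v.
  by rewrite -map_mxM hv map_mxZ.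
apply: (gersh2_region_left_eigen (x := u *m Sc)).
- by apply: contraNneq u_neq0 => uS_eq0; rewrite -(mulmxK Sc_unit u) uS_eq0 mul0mx.
- by rewrite /B !map_mxM map_invmx; exact: left_eigen_similar.
- have := mulmx_left_right_eigen_eq0 u_eigen vc_eigen hne.
  move/(congr1 (fun N : 'M_1 => N 0 0)); rewrite !mxE => uv_eq0.
  rewrite -[RHS]uv_eq0; apply: eq_bigr => i _.
  by rewrite /Sc map_diag_mx mul_mx_diag !mxE.
Qed.
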